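(* The elements $\mathsf{F}_{[t]}$, where $t$ runs over the set of unlabeled rooted trees, form a basis of the vector space $H_{\operatorname{NAP}}$.
   Context: $\Pi_{\operatorname{NAP}}(I)$ is the set of forests of rooted trees with vertex set exactly $I$, ordered by: $y$ covers $x$ iff $y$ is obtained from $x$ by adding an edge from the root of one component of $x$ to the root of another component (the latter root remaining the root); $\widehat{0}$ is the forest of one-vertex trees. For a rooted tree $t$ on $I$, $[\widehat{0},t]$ is an interval in $\Pi_{\operatorname{NAP}}(I)$, whose isomorphism class depends only on the unlabeled tree underlying $t$. $H_{\operatorname{NAP}}$ is the incidence Hopf algebra (Schmitt's construction) of this family: it has a basis $\mathsf{F}_{[Q]}$ indexed by isomorphism classes of finite products $Q$ of posets $[\widehat{0},t]$ ($t$ rooted trees), product $\mathsf{F}_{[Q]}\mathsf{F}_{[Q']}=\mathsf{F}_{[Q\times Q']}$, unit the class of the one-element poset, coproduct $\Delta\mathsf{F}_{[Q]}=\sum_{x\in Q}\mathsf{F}_{[\widehat{0},x]}\otimes\mathsf{F}_{[x,\widehat{1}]}$. We write $\mathsf{F}_{[t]}=\mathsf{F}_{[[\widehat{0},t]]}$. *)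

From HB Require Import structures.
From mathcomp Require Import all_boot all_order all_algebra.
Set Implicit Arguments. Unset Strict Implicit. Unset Printing Implicit Defensive.
Import GRing.Theory.

(* A rooted forest with vertex set 'I_n is encoded by its parent map:
   [x i = None] iff i is a root, [x i = Some j] iff j is the parent of i. *)
Definition parent_fun (n : nat) := {ffun 'I_n -> option 'I_n}.

(* no cycles: following parents from any vertex reaches a root within n steps *)
Definition is_forest n (x : parent_fun n) : bool :=
  [forall i, iter n (fun o => obind (fun j => x j) o) (Some i) == None].

Definition is_root n (x : parent_fun n) (r : 'I_n) : bool := x r == None.

Definition is_tree n (x : parent_fun n) : bool :=
  is_forest x && (#|[pred r | is_root x r]| == 1).

Definition fzero n : parent_fun n := [ffun _ => None].

Definition graft n (x : parent_fun n) (r1 r2 : 'I_n) : parent_fun n :=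
  [ffun i => if i == r1 then Some r2 else x i].

Definition nap_cover n (x y : parent_fun n) : bool :=
  [exists r1, exists r2,
     [&& r1 != r2, is_root x r1, is_root x r2 & y == graft x r1 r2]].

Definition nap_le n : rel (parent_fun n) := connect (@nap_cover n).

Record rtree := RTree {
  rt_size : nat;
  rt_par : parent_fun rt_size;
  rt_isTree : is_tree rt_par }.

(* isomorphism of rooted trees (so unlabeled trees = iso classes) *)
Definition tree_iso (t u : rtree) : Prop :=
  exists g : 'I_(rt_size t) -> 'I_(rt_size u),
    bijective g /\ forall i, rt_par u (g i) = omap g (rt_par t i).

Record fposet := FPoset { fp_car : finType; fp_le : rel fp_car }.

Definition fp_iso (P Q : fposet) : Prop :=
  exists f : fp_car P -> fp_car Q,
    bijective f /\ forall x y, fp_le x y = fp_le (f x) (f y).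

Definition int_car (t : rtree) : finType :=
  {x : parent_fun (rt_size t) |
     [&& is_forest x, nap_le (fzero _) x & nap_le x (rt_par t)]}.

Definition fp_int (t : rtree) : fposet :=
  @FPoset (int_car t) (fun x y => nap_le (val x) (val y)).

Definition fp_prod (P Q : fposet) : fposet :=
  @FPoset (fp_car P * fp_car Q)%type
    (fun x y => fp_le x.1 y.1 && fp_le x.2 y.2).

Definition fp_one : fposet := @FPoset unit (fun _ _ => true).

Definition prodQ (s : seq rtree) : fposet :=
  foldr (fun t P => fp_prod (fp_int t) P) fp_one s.

(* An element y of the interval [0, t] is t with some edges deleted, and it is
   determined by the set of vertices keeping their parent edge; the sets that
   occur are exactly the sets of non-roots closed under taking children, so
   [0, t] is the inclusion lattice of these sets.  Gluing two trees along their
   roots takes the product of such lattices, hence every finite product of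
   intervals is isomorphic to a single interval [0, t]: the F_[t] span.
   Conversely, the join-irreducibles of the lattice are the subtrees below the
   non-root vertices, ordered by inclusion as the vertices are by ancestry, so
   an isomorphism [0, t] ~ [0, u] induces an isomorphism t ~ u of trees: the
   F_[t] of non-isomorphic trees are distinct basis vectors. *)

From HB Require Import structures.
From mathcomp Require Import all_boot all_order all_algebra.
Set Implicit Arguments. Unset Strict Implicit. Unset Printing Implicit Defensive.

Section ParentWalk.
Variable n : nat.
Implicit Types x y z : parent_fun n.

Definition ascend x (o : option 'I_n) := obind (fun j => x j) o.

Lemma tree_forest x : is_tree x -> is_forest x.
Proof. by case/andP. Qed.

Lemma tree_rootE x r : is_tree x -> x r = None -> forall v, (x v == None) = (v == r).
Proof.
case/andP => _ /eqP Hcard Hr v; apply/eqP/eqP => [Hv|->//].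
have /card_le1_eqP : #|[pred r | is_root x r]| <= 1 by rewrite Hcard.
by apply; rewrite inE /is_root ?Hv ?Hr.
Qed.

Lemma tree_has_root x : is_tree x -> exists r, x r = None.
Proof.
case/andP => _ /eqP Hcard.
have : 0 < #|[pred r | is_root x r]| by rewrite Hcard.
by case/card_gt0P => r; rewrite inE /is_root => /eqP; exists r.
Qed.

Lemma iter_ascend_None x k : iter k (ascend x) None = None.
Proof. by elim: k => //= k ->. Qed.

Lemma iter_ascendS x k v : iter k.+1 (ascend x) (Some v) = iter k (ascend x) (x v).
Proof. by rewrite iterSr. Qed.

Lemma forest_iter_ge x k v : is_forest x -> n <= k -> iter k (ascend x) (Some v) = None.
Proof.
move=> /forallP /(_ v) /eqP Hv Hk.
by rewrite -(subnK Hk) iterD Hv iter_ascend_None.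
Qed.

Lemma forest_iter_lt x k v w : is_forest x -> iter k (ascend x) (Some v) = Some w -> k < n.
Proof. by move=> Hf Hk; rewrite ltnNge; apply/negP => /(forest_iter_ge v Hf); rewrite Hk. Qed.

Lemma forest_acyclic x k v : is_forest x -> iter k.+1 (ascend x) (Some v) <> Some v.
Proof.
move=> Hf Hk.
have cycle m : iter (k.+1 * m) (ascend x) (Some v) = Some v.
  by elim: m => [|m IH]; rewrite ?muln0 // mulnS iterD IH.
by have := cycle n; rewrite forest_iter_ge // leq_pmull.
Qed.

Lemma forest_no_loop x v : is_forest x -> x v <> Some v.
Proof. by move=> Hf Hv; apply: (forest_acyclic (k := 0) (v := v) Hf); rewrite iter_ascendS Hv. Qed.

Definition pruning y x := forall i, y i = None \/ y i = x i.

Lemma pruning_iter y x k v w : pruning y x ->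
  iter k (ascend y) (Some v) = Some w -> iter k (ascend x) (Some v) = Some w.
Proof.
move=> Hyx; elim: k v => [//|k IH] v.
rewrite !iter_ascendS; case Hy: (y v) => [v'|]; last by rewrite iter_ascend_None.
by have [Hv|<-] := Hyx v; [rewrite Hv in Hy | rewrite Hy; apply: IH].
Qed.

Lemma pruning_forest y x : pruning y x -> is_forest x -> is_forest y.
Proof.
move=> Hyx Hf; apply/forallP => i; apply/eqP.
case Hi: (iter n (ascend y) (Some i)) => [w|//].
by move/forallP: Hf => /(_ i) /eqP; rewrite (pruning_iter Hyx Hi).
Qed.

Lemma exists_top_edge z c : is_forest z -> z c != None ->
  exists b a, [/\ exists k, iter k (ascend z) (Some c) = Some b, z b = Some a & z a = None].
Proof.
move=> Hf Hc.
have reach_None : exists k, iter k (ascend z) (Some c) == None.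
  by exists n; rewrite forest_iter_ge.
have [m Hm Hmin] := ex_minnP reach_None.
case: m Hm Hmin => [//|[|k]] Hm Hmin; first by rewrite /= (negbTE Hc) in Hm.
have alive j : j < k.+2 -> iter j (ascend z) (Some c) != None.
  by move=> Hj; apply: contraTN Hj => /Hmin; rewrite -leqNgt.
case Eb: (iter k (ascend z) (Some c)) (alive k (ltnW (ltnSn _))) => [b|//] _.
case Ea: (iter k.+1 (ascend z) (Some c)) (alive k.+1 (ltnSn _)) => [a|//] _.
exists b, a; split; first by exists k.
  by rewrite iterS Eb in Ea.
by move: Hm; rewrite iterS Ea => /eqP.
Qed.

End ParentWalk.

Lemma no_tree0 (x : parent_fun 0) : ~~ is_tree x.
Proof. by apply/negP => /tree_has_root [[]]. Qed.

Section IntervalOrder.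
Variable n : nat.
Implicit Types x y z : parent_fun n.

(* A closed form of [nap_le y z] when [z] is a forest. *)
Definition nap_below y z :=
  pruning y z /\ forall c p, y c = None -> z c = Some p -> y p = None.

Lemma nap_below_refl y : nap_below y y.
Proof. by split=> [i|c p ->]; [right|]. Qed.

Lemma nap_below_trans y a z : nap_below y a -> nap_below a z -> nap_below y z.
Proof.
move=> [Hya Hya'] [Haz Haz']; split.
  move=> i; have [->|->] := Hya i; first by left.
  by have [->|->] := Haz i; [left|right].
move=> c p Hc Hz; case Ea: (a c) => [q|].
  have [E|E] := Haz c; first by rewrite E in Ea.
  by apply: Hya' Hc _; rewrite E.
by have [->|->] := Hya p; last exact: Haz' Hz.
Qed.

Lemma nap_cover_below y z : nap_cover y z -> nap_below y z.
Proof.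
case/existsP => r1 /existsP [r2 /and4P [_ Hr1 Hr2 /eqP ->]]; split.
  move=> i; rewrite ffunE; case: eqP => [->|_]; [by left; apply/eqP | by right].
move=> c p Hc; rewrite ffunE; case: eqP => [_ [<-]|_]; first by apply/eqP.
by rewrite Hc.
Qed.

Lemma nap_le_below y z : nap_le y z -> nap_below y z.
Proof.
case/connectP => p Hp ->.
elim: p y Hp => [|a p IH] y /=; first by move=> _; apply: nap_below_refl.
by case/andP => Hc Hp; apply: nap_below_trans (nap_cover_below Hc) (IH _ Hp).
Qed.

Lemma nap_below_root_up y z c k w : nap_below y z -> y c = None ->
  iter k (ascend z) (Some c) = Some w -> y w = None.
Proof.
move=> [_ Hup] Hc; elim: k w => [w [<-]//|k IH w].
rewrite iterS; case E: (iter k (ascend z) (Some c)) => [w'|//] /= Hw'.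
exact: Hup (IH _ E) Hw'.
Qed.

Definition cut_edge z b : parent_fun n := [ffun j => if j == b then None else z j].

(* [b] is the last vertex before the root on the way up from a vertex where
   [y] and [z] differ. *)
Lemma nap_below_cover_step y z : is_forest z -> nap_below y z -> y != z ->
  exists b, [/\ y b = None, z b != None,
                nap_below y (cut_edge z b) & nap_cover (cut_edge z b) z].
Proof.
move=> Hf [Hyz Hup] Hne.
have [i Hi] : exists i, y i != z i.
  apply/existsP; apply: contraNT Hne => /existsPn Heq.
  by apply/eqP/ffunP => i; apply/eqP; rewrite -[_ == _]negbK Heq.
have Hyi : y i = None by have [//|E] := Hyz i; rewrite E eqxx in Hi.
have Hzi : z i != None by apply: contra Hi => /eqP ->; rewrite Hyi.
have [b [a [[k Hk] Hb Ha]]] := exists_top_edge Hf Hzi.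
have Hyb : y b = None := nap_below_root_up (conj Hyz Hup) Hyi Hk.
have Hab : a != b by apply/eqP => Eab; rewrite Eab Hb in Ha.
exists b; split; rewrite ?Hb //.
  split=> [j|c p Hc]; rewrite ffunE.
    by case: eqP => [->|_]; [left | apply: Hyz].
  by case: eqP => // _; apply: Hup.
apply/existsP; exists b; apply/existsP; exists a.
rewrite eq_sym Hab /is_root !ffunE eqxx (negbTE Hab) Ha eqxx /=.
by apply/eqP/ffunP => j; rewrite !ffunE; case: eqP => [->|].
Qed.

Lemma nap_below_le y z : is_forest z -> nap_below y z -> nap_le y z.
Proof.
move: {2}#|_| (leqnn #|[set i | y i != z i]|) => N.
elim: N z => [|N IH] z HN Hf Hyz.
  suff -> : y = z by apply: connect0.
  apply/ffunP => i; apply/eqP; apply: contraTT HN => Hi.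
  by rewrite -ltnNge card_gt0; apply/set0Pn; exists i; rewrite inE.
have [->|Hne] := eqVneq y z; first exact: connect0.
have [b [Hyb Hzb Hyw Hcov]] := nap_below_cover_step Hf Hyz Hne.
apply: connect_trans (connect1 Hcov); apply: IH Hyw.
- rewrite -ltnS; apply: leq_trans HN; apply: proper_card; apply/properP; split.
    apply/subsetP => j; rewrite !inE ffunE.
    by case: (eqVneq j b) => [->|//]; rewrite Hyb.
  exists b; first by rewrite inE Hyb eq_sym.
  by rewrite inE /cut_edge ffunE eqxx Hyb.
- apply: (pruning_forest _ Hf) => j; rewrite ffunE; case: eqP; by [left|right].
Qed.

End IntervalOrder.

Section DescClosed.
Variable n : nat.
Implicit Types (x y : parent_fun n) (S : {set 'I_n}).

Definition nonroots x := [set i | x i != None].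

(* An element [y] of [0, x] is determined by [nonroots y], the set of vertices
   keeping their edge of [x]; the sets that occur are the [desc_closed] ones. *)
Definition desc_closed x S : bool :=
  (S \subset nonroots x) &&
  [forall c, forall p, (x c == Some p) ==> (p \in S) ==> (c \in S)].

Lemma desc_closedP x S :
  reflect ((forall i, i \in S -> x i != None) /\
           (forall c p, x c = Some p -> p \in S -> c \in S)) (desc_closed x S).
Proof.
apply: (iffP andP) => [[/subsetP HS /forallP Hc]|[HS Hc]]; split.
- by move=> i /HS; rewrite inE.
- by move=> c p Hcp Hp; move: (Hc c) => /forallP /(_ p); rewrite Hcp eqxx Hp.
- by apply/subsetP => i /HS; rewrite inE.
- apply/forallP => c; apply/forallP => p; apply/implyP => /eqP Hcp.
  exact/implyP/Hc.
Qed.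

Lemma root_notin_closed x r S : x r = None -> desc_closed x S -> r \notin S.
Proof. by move=> Hr /desc_closedP [HS _]; apply/negP => /HS; rewrite Hr. Qed.

Definition prune x S : parent_fun n := [ffun i => if i \in S then x i else None].

Lemma pruning_nonroots y x : pruning y x -> nonroots y \subset nonroots x.
Proof. by move=> Hyx; apply/subsetP => i; rewrite !inE; case: (Hyx i) => ->. Qed.

Lemma prune_nonroots y x : pruning y x -> y = prune x (nonroots y).
Proof.
move=> Hyx; apply/ffunP => i; rewrite ffunE inE.
by case: (Hyx i) => ->; rewrite ?eqxx //; case: (x i).
Qed.

Lemma nonroots_prune x S : desc_closed x S -> nonroots (prune x S) = S.
Proof.
move=> /desc_closedP [HS _]; apply/setP => i; rewrite inE ffunE.
by case: ifP => [/HS //|]; rewrite eqxx.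
Qed.

Lemma prune_below x S : desc_closed x S -> nap_below (prune x S) x.
Proof.
move=> /desc_closedP [_ Hc]; split=> [i|c p]; rewrite !ffunE.
  by case: ifP; [right|left].
case: ifP => [_ ->//|Hc' _ Hcp]; case: ifP => // Hp.
by rewrite (Hc _ _ Hcp Hp) in Hc'.
Qed.

Lemma nonroots_desc_closed x y : nap_below y x -> desc_closed x (nonroots y).
Proof.
move=> [Hyx Hup]; apply/desc_closedP; split.
  by move=> i; rewrite inE; case: (Hyx i) => [->|<-]; rewrite ?eqxx.
move=> c p Hcp; rewrite !inE; apply: contraNN => /eqP Hyc.
by rewrite (Hup _ _ Hyc Hcp).
Qed.

Lemma nap_below_nonroots x a b : nap_below a x -> nap_below b x ->
  nonroots a \subset nonroots b -> nap_below a b.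
Proof.
move=> [Hax Hup] [Hbx _] /subsetP Hab; split.
  move=> i; case Ea: (a i) => [v|]; [right | by left].
  have /Hab : i \in nonroots a by rewrite inE Ea.
  rewrite inE; case: (Hbx i) => [->//|-> _].
  by case: (Hax i) Ea => ->.
move=> c p Hc Hb; apply: Hup Hc _.
by case: (Hbx c) Hb => ->.
Qed.

Lemma nap_below_interval x y : is_forest x -> nap_below y x ->
  [&& is_forest y, nap_le (fzero _) y & nap_le y x].
Proof.
move=> Hf Hyx; have Hfy := pruning_forest Hyx.1 Hf.
rewrite Hfy (nap_below_le Hf Hyx) andbT /=.
by apply: nap_below_le Hfy _; split=> [i|c p _ _]; rewrite ffunE //; left.
Qed.

End DescClosed.

Definition represents (P : fposet) n (x : parent_fun n) : Prop :=
  exists iota : fp_car P -> {set 'I_n},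
   [/\ injective iota, forall a, desc_closed x (iota a),
       (forall S, desc_closed x S -> exists a, iota a = S)
     & forall a b, fp_le a b = (iota a \subset iota b)].

Lemma interval_represents (t : rtree) : represents (fp_int t) (rt_par t).
Proof.
have Hf := tree_forest (rt_isTree t).
have Hbelow (a : int_car t) : nap_below (val a) (rt_par t).
  by case/and3P: (valP a) => _ _; apply: nap_le_below.
exists (fun a => nonroots (val a)); split.
- move=> a b Eab; apply: val_inj.
  by rewrite (prune_nonroots (Hbelow a).1) (prune_nonroots (Hbelow b).1) Eab.
- by move=> a; apply: nonroots_desc_closed.
- move=> S HS; have Hint := nap_below_interval Hf (prune_below HS).
  by exists (Sub (prune (rt_par t) S) Hint); rewrite SubK nonroots_prune.
- move=> a b /=; apply/idP/idP => [/nap_le_below [Hab _]|Hab].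
    exact: pruning_nonroots.
  apply: nap_below_le; first by case/and3P: (valP b).
  exact: nap_below_nonroots (Hbelow a) (Hbelow b) Hab.
Qed.

Lemma represents_prod_one (P : fposet) n (x : parent_fun n) :
  represents P x -> represents (fp_prod P fp_one) x.
Proof.
case=> iota [Hinj Hcl Hsurj Hle]; exists (fun ab => iota ab.1); split.
- by move=> [a []] [b []] /= /Hinj ->.
- by move=> ab; apply: Hcl.
- by move=> S /Hsurj [a Ha]; exists (a, tt).
- by move=> [a []] [b []] /=; rewrite andbT Hle.
Qed.

Lemma represents_iso (P P' : fposet) n (x : parent_fun n) :
  represents P x -> represents P' x -> fp_iso P P'.
Proof.
case=> i [Hi Hcl Hsurj Hle]; case=> j [Hj Hcl' Hsurj' Hle'].
have Hf a : exists b, j b == i a.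
  by case: (Hsurj' _ (Hcl a)) => b Hb; exists b; apply/eqP.
have Hg b : exists a, i a == j b.
  by case: (Hsurj _ (Hcl' b)) => a Ha; exists a; apply/eqP.
pose f a := xchoose (Hf a); pose g b := xchoose (Hg b).
have Ef a : j (f a) = i a by apply/eqP; apply: (xchooseP (Hf a)).
have Eg b : i (g b) = j b by apply/eqP; apply: (xchooseP (Hg b)).
exists f; split; last by move=> a b; rewrite Hle Hle' !Ef.
by exists g => [a|b]; [apply: Hi; rewrite Eg Ef | apply: Hj; rewrite Ef Eg].
Qed.

Definition single_vertex : parent_fun 1 := [ffun _ => None].

Lemma single_vertex_tree : is_tree single_vertex.
Proof.
apply/andP; split; first by apply/forallP => i; rewrite /= ffunE.
apply/eqP; apply: (@eq_card1 _ ord0) => i; rewrite !inE /is_root ffunE eqxx.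
by rewrite ord1 eqxx.
Qed.

Lemma represents_one : represents fp_one single_vertex.
Proof.
exists (fun _ => set0); split.
- by move=> [] [] _.
- by move=> _; apply/desc_closedP; split=> [i|c p]; rewrite inE.
- move=> S /desc_closedP [HS _]; exists tt; apply/setP => i; rewrite inE.
  by apply/esym/negP => /HS; rewrite ffunE eqxx.
- by move=> a b; rewrite sub0set.
Qed.

Section Depth.
Variable n : nat.
Implicit Types x : parent_fun n.

Definition depth x v := \sum_(0 <= j < n) (iter j.+1 (ascend x) (Some v) != None).

Lemma depth_root x r : x r = None -> depth x r = 0.
Proof.
move=> Hr; rewrite /depth big1_seq // => j _.
by rewrite iter_ascendS Hr iter_ascend_None.
Qed.

Lemma depth_parent x v p : is_forest x -> x v = Some p -> depth x v = (depth x p).+1.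
Proof.
rewrite /depth; case: n x v p => [? []//|m] x v p Hf Hv.
under eq_bigr => j _ do rewrite iter_ascendS Hv.
rewrite [in RHS]big_nat_recr // big_nat_recl // (forest_iter_ge (k := m.+1) p Hf) //=.
by rewrite addn0 add1n.
Qed.

Lemma depth_lt x v : is_forest x -> depth x v < n.
Proof.
rewrite /depth; case: n x v => [? []//|m] x v Hf.
rewrite [X in X < _]big_nat_recr // (forest_iter_ge (k := m.+1) v Hf) //= addn0 ltnS.
rewrite -[m in _ <= m]subn0 -[m - 0]muln1 -sum_nat_const_nat.
by apply: leq_sum => j _; apply: leq_b1.
Qed.

Lemma height_forest x (h : 'I_n -> nat) :
  (forall v, h v < n) -> (forall v p, x v = Some p -> h p < h v) -> is_forest x.
Proof.
move=> Hbound Hdec.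
have Hwalk k v w : iter k (ascend x) (Some v) = Some w -> h w + k <= h v.
  elim: k v => [v [->]|k IH v]; first by rewrite addn0.
  rewrite iter_ascendS; case E: (x v) => [p|]; last by rewrite iter_ascend_None.
  by move/IH => Hle; rewrite addnS; apply: leq_ltn_trans Hle (Hdec _ _ E).
apply/forallP => v; apply/eqP.
case E: (iter n (ascend x) (Some v)) => [w|//].
have := leq_ltn_trans (Hwalk _ _ _ E) (Hbound v).
by rewrite ltnNge leq_addl.
Qed.

End Depth.

(* Gluing [y] to [x] by identifying the root [r2] of [y] with the root [r1] of
   [x]; the vertices of [y] other than [r2] come after those of [x]. *)
Section RootMerge.
Variables (n1 n2 : nat) (x : parent_fun n1) (r1 : 'I_n1)
  (y : parent_fun n2.+1) (r2 : 'I_n2.+1).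
Hypotheses (Hx : is_tree x) (Hr1 : x r1 = None) (Hy : is_tree y) (Hr2 : y r2 = None).

Definition glue_r (v : 'I_n2.+1) : 'I_(n1 + n2) :=
  if unlift r2 v is Some k then rshift n1 k else lshift n2 r1.

Definition root_merge : parent_fun (n1 + n2) :=
  [ffun k => match split k with
             | inl i => omap (lshift n2) (x i)
             | inr k => omap glue_r (y (lift r2 k))
             end].

Lemma split_lshift (i : 'I_n1) : split (lshift n2 i) = inl i.
Proof. exact: (unsplitK (inl _ i)). Qed.

Lemma split_rshift (k : 'I_n2) : split (rshift n1 k) = inr k.
Proof. exact: (unsplitK (inr _ k)). Qed.

Lemma glue_r_lift k : glue_r (lift r2 k) = rshift n1 k.
Proof. by rewrite /glue_r liftK. Qed.

Lemma glue_r_root : glue_r r2 = lshift n2 r1.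
Proof. by rewrite /glue_r unlift_none. Qed.

Lemma merge_ind (P : 'I_(n1 + n2) -> Prop) :
  (forall i, P (lshift n2 i)) -> (forall v, P (glue_r v)) -> forall k, P k.
Proof.
move=> Hl Hr k; rewrite -(splitK k); case: (split k) => [i|k'] //=.
by rewrite -glue_r_lift.
Qed.

Lemma root_merge_l i : root_merge (lshift n2 i) = omap (lshift n2) (x i).
Proof. by rewrite ffunE split_lshift. Qed.

Lemma root_merge_r v : root_merge (glue_r v) = omap glue_r (y v).
Proof.
case: (unliftP r2 v) => [k ->|->]; first by rewrite glue_r_lift ffunE split_rshift.
by rewrite glue_r_root root_merge_l Hr1 Hr2.
Qed.

Lemma glue_r_eq_root v : (glue_r v == lshift n2 r1) = (v == r2).
Proof.
case: (unliftP r2 v) => [k ->|->]; last by rewrite glue_r_root !eqxx.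
rewrite glue_r_lift [lift _ _ == _]eq_sym (negbTE (neq_lift _ _)).
apply/eqP => /(congr1 val) /= Ek.
by have := ltn_ord r1; rewrite -Ek ltnNge leq_addr.
Qed.

Lemma root_merge_tree : is_tree root_merge.
Proof.
have Hfx := tree_forest Hx; have Hfy := tree_forest Hy.
pose h k := match split k with inl i => depth x i | inr k => depth y (lift r2 k) end.
have h_l i : h (lshift n2 i) = depth x i by rewrite /h split_lshift.
have h_r v : h (glue_r v) = depth y v.
  case: (unliftP r2 v) => [k ->|->]; first by rewrite glue_r_lift /h split_rshift.
  by rewrite glue_r_root h_l depth_root // depth_root.
apply/andP; split.
  apply: (height_forest (h := h)); apply: merge_ind.
  - by move=> i; rewrite h_l; apply: leq_trans (depth_lt _ Hfx) (leq_addr _ _).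
  - move=> v; rewrite h_r; apply: leq_trans (depth_lt _ Hfy) _.
    by rewrite -add1n leq_add2r (leq_ltn_trans (leq0n _) (ltn_ord r1)).
  - move=> i p; rewrite root_merge_l; case E: (x i) => [j|] //= [<-].
    by rewrite !h_l (depth_parent Hfx E).
  - move=> v p; rewrite root_merge_r; case E: (y v) => [q|] //= [<-].
    by rewrite !h_r (depth_parent Hfy E).
apply/eqP; apply: (@eq_card1 _ (lshift n2 r1)); apply: merge_ind => [i|v].
  rewrite !inE /is_root root_merge_l (inj_eq (@lshift_inj _ _)) -(tree_rootE Hx Hr1).
  by case: (x i).
rewrite !inE /is_root root_merge_r glue_r_eq_root -(tree_rootE Hy Hr2).
by case: (y v).
Qed.

Definition merge_set (S1 : {set 'I_n1}) (S2 : {set 'I_n2.+1}) : {set 'I_(n1 + n2)} :=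
  [set k | match split k with inl i => i \in S1 | inr k => lift r2 k \in S2 end].

Lemma mem_merge_set_l (S1 : {set 'I_n1}) (S2 : {set 'I_n2.+1}) i :
  (lshift n2 i \in merge_set S1 S2) = (i \in S1).
Proof. by rewrite inE split_lshift. Qed.

Lemma mem_merge_set_r (S1 : {set 'I_n1}) (S2 : {set 'I_n2.+1}) v :
  desc_closed x S1 -> desc_closed y S2 -> (glue_r v \in merge_set S1 S2) = (v \in S2).
Proof.
move=> HS1 HS2; case: (unliftP r2 v) => [k ->|->].
  by rewrite glue_r_lift inE split_rshift.
rewrite glue_r_root mem_merge_set_l.
by rewrite (negbTE (root_notin_closed Hr1 HS1)) (negbTE (root_notin_closed Hr2 HS2)).
Qed.

Lemma merge_set_subset (S1 T1 : {set 'I_n1}) (S2 T2 : {set 'I_n2.+1}) :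
  desc_closed x S1 -> desc_closed y S2 -> desc_closed x T1 -> desc_closed y T2 ->
  (merge_set S1 S2 \subset merge_set T1 T2) = (S1 \subset T1) && (S2 \subset T2).
Proof.
move=> HS1 HS2 HT1 HT2.
apply/subsetP/andP => [Hsub|[/subsetP Hsub1 /subsetP Hsub2]].
  split; apply/subsetP.
    by move=> i; have := Hsub (lshift n2 i); rewrite !mem_merge_set_l.
  by move=> v; have := Hsub (glue_r v); rewrite !mem_merge_set_r.
apply: merge_ind => [i|v]; first by rewrite !mem_merge_set_l; apply: Hsub1.
by rewrite !mem_merge_set_r //; apply: Hsub2.
Qed.

Lemma merge_set_closed (S1 : {set 'I_n1}) (S2 : {set 'I_n2.+1}) :
  desc_closed x S1 -> desc_closed y S2 -> desc_closed root_merge (merge_set S1 S2).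
Proof.
move=> HS1 HS2; have mem_r v := mem_merge_set_r v HS1 HS2.
have /desc_closedP [Hnr1 Hcl1] := HS1; have /desc_closedP [Hnr2 Hcl2] := HS2.
apply/desc_closedP; split.
  apply: merge_ind => [i|v]; rewrite ?mem_merge_set_l ?root_merge_l ?mem_r ?root_merge_r.
    by move/Hnr1; case: (x i).
  by move/Hnr2; case: (y v).
apply: merge_ind => [i|v] p.
  rewrite root_merge_l; case E: (x i) => [j|] //= [<-].
  by rewrite !mem_merge_set_l; apply: Hcl1 E.
rewrite root_merge_r; case E: (y v) => [q|] //= [<-].
by rewrite !mem_r; apply: Hcl2 E.
Qed.

Lemma merge_set_surj S : desc_closed root_merge S ->
  exists S1 S2, [/\ desc_closed x S1, desc_closed y S2 & merge_set S1 S2 = S].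
Proof.
case/desc_closedP => Hnr Hcl.
have HS1 : desc_closed x (lshift n2 @^-1: S).
  apply/desc_closedP; split=> [i|c p Hc]; rewrite !inE.
    by move/Hnr; rewrite root_merge_l; case: (x i).
  by apply: Hcl; rewrite root_merge_l Hc.
have HS2 : desc_closed y (glue_r @^-1: S).
  apply/desc_closedP; split=> [v|c p Hc]; rewrite !inE.
    by move/Hnr; rewrite root_merge_r; case: (y v).
  by apply: Hcl; rewrite root_merge_r Hc.
exists (lshift n2 @^-1: S), (glue_r @^-1: S); split=> //.
apply/setP; apply: merge_ind => [i|v]; first by rewrite mem_merge_set_l inE.
by rewrite mem_merge_set_r // inE.
Qed.

Lemma represents_root_merge (P P' : fposet) :
  represents P x -> represents P' y -> represents (fp_prod P P') root_merge.
Proof.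
case=> i [Hi Hcl Hsurj Hle]; case=> j [Hj Hcl' Hsurj' Hle'].
have Hsub (a a' : fp_car P) (b b' : fp_car P') :
    (merge_set (i a) (j b) \subset merge_set (i a') (j b')) = fp_le a a' && fp_le b b'.
  by rewrite merge_set_subset // Hle Hle'.
exists (fun ab => merge_set (i ab.1) (j ab.2)); split.
- move=> [a b] [a' b'] /= /eqP; rewrite eqEsubset !Hsub !Hle !Hle'.
  case/andP => /andP [Ha Hb] /andP [Ha' Hb'].
  by congr pair; [apply: Hi | apply: Hj]; apply/eqP; rewrite eqEsubset ?Ha ?Ha' ?Hb ?Hb'.
- by move=> [a b]; apply: merge_set_closed.
- move=> S /merge_set_surj [S1 [S2 [H1 H2 <-]]].
  by case: (Hsurj _ H1) => a <-; case: (Hsurj' _ H2) => b <-; exists (a, b).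
- by move=> [a b] [a' b'] /=; rewrite Hsub.
Qed.

End RootMerge.

Section Ancestry.
Variables (n : nat) (x : parent_fun n).
Implicit Types (u v w p r : 'I_n) (S T : {set 'I_n}).

Definition reaches v w := exists k, iter k (ascend x) (Some v) = Some w.

Lemma reaches_refl v : reaches v v.
Proof. by exists 0. Qed.

Lemma reaches_trans u v w : reaches u v -> reaches v w -> reaches u w.
Proof. by move=> [j Hj] [k Hk]; exists (k + j); rewrite iterD Hj. Qed.

Lemma reaches_parent v p : x v = Some p -> reaches v p.
Proof. by move=> Hv; exists 1; rewrite iter_ascendS Hv. Qed.

Lemma reaches_up v p w : x v = Some p -> reaches v w -> w != v -> reaches p w.
Proof.
move=> Hv [[|k] Hk] Hwv; first by case: Hk Hwv => ->; rewrite eqxx.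
by exists k; rewrite -Hv -iter_ascendS.
Qed.

Lemma reaches_from_root r w : x r = None -> reaches r w -> w = r.
Proof.
move=> Hr [[|k] Hk]; first by case: Hk.
by rewrite iter_ascendS Hr iter_ascend_None in Hk.
Qed.

Lemma reaches_nonroot v w : x v != None -> reaches w v -> x w != None.
Proof.
by move=> Hv Hwv; apply: contra Hv => /eqP Hw; rewrite (reaches_from_root Hw Hwv) Hw.
Qed.

Lemma closed_reaches S v w : desc_closed x S -> v \in S -> reaches w v -> w \in S.
Proof.
case/desc_closedP => _ Hcl Hv [k Hk]; elim: k w Hk => [w [->]//|k IH w].
rewrite iter_ascendS; case Ew: (x w) => [p|]; last by rewrite iter_ascend_None.
by move/IH; apply: Hcl Ew.
Qed.

Lemma closed_setD1_top S m a : desc_closed x S -> m \in S -> x m = Some a -> a \notin S ->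
  desc_closed x (S :\ m).
Proof.
case/desc_closedP => Hnr Hcl Hm Hma Ha; apply/desc_closedP.
split=> [i /setD1P [_ /Hnr]//|c p Hc /setD1P [Hpm Hp]].
apply/setD1P; split; last exact: Hcl Hc Hp.
by apply: contraTneq Hp => Ecm; move: Hc; rewrite Ecm Hma => [[<-]].
Qed.

Hypothesis Hf : is_forest x.

Lemma reaches_antisym v w : reaches v w -> reaches w v -> v = w.
Proof.
move=> [j Hj] [k Hk]; case: (posnP (k + j)) => [/eqP|Hpos].
  by rewrite addn_eq0 => /andP [_ /eqP Ej]; move: Hj; rewrite Ej => [[]].
have := iterD k j (ascend x) (Some v); rewrite Hj Hk -(prednK Hpos).
by move/(forest_acyclic Hf).
Qed.

Lemma root_iff r : x r = None <-> forall w, reaches r w -> w = r.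
Proof.
split=> [Hr w|Hmax]; first exact: reaches_from_root.
case Er: (x r) => [p|] //; have Hp := Hmax _ (reaches_parent Er).
by move: Er; rewrite Hp => /(forest_no_loop Hf).
Qed.

Lemma parent_iff v p : x v = Some p <->
  [/\ reaches v p, p != v & forall w, reaches v w -> w = v \/ reaches p w].
Proof.
split=> [Hv|[Hvp Hpv Hmax]].
  split; first exact: reaches_parent.
    by apply/eqP => Epv; move: Hv; rewrite Epv => /(forest_no_loop Hf).
  by move=> w Hw; case: (eqVneq w v) => [|Hwv]; [left | right; apply: reaches_up Hv Hw Hwv].
case Ev: (x v) => [q|]; last by move: Hpv; rewrite (reaches_from_root Ev Hvp) eqxx.
have Hqv : q != v by apply/eqP => Eqv; move: Ev; rewrite Eqv => /(forest_no_loop Hf).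
case: (Hmax _ (reaches_parent Ev)) => [Eqv|Hpq]; first by rewrite Eqv eqxx in Hqv.
by rewrite (reaches_antisym Hpq (reaches_up Ev Hvp Hpv)).
Qed.

Lemma tree_reaches_root r v : is_tree x -> x r = None -> reaches v r.
Proof.
move=> Hx Hr; have Hroot := tree_rootE Hx Hr.
case: (eqVneq (x v) None) => [/eqP|Hv]; first by rewrite Hroot => /eqP ->; apply: reaches_refl.
have [b [a [Hvb Hb /eqP Ha]]] := exists_top_edge Hf Hv.
by move: Ha; rewrite Hroot => /eqP <-; apply: reaches_trans Hvb (reaches_parent Hb).
Qed.

Definition subtree v := [set w | [exists k : 'I_n, iter k (ascend x) (Some w) == Some v]].

Lemma subtreeP v w : reflect (reaches w v) (w \in subtree v).
Proof.
rewrite inE; apply: (iffP existsP) => [[k /eqP Hk]|[k Hk]]; first by exists k.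
by exists (Ordinal (forest_iter_lt Hf Hk)); apply/eqP.
Qed.

Lemma subtree_closed v : x v != None -> desc_closed x (subtree v).
Proof.
move=> Hv; apply/desc_closedP; split=> [w /subtreeP|c p Hc /subtreeP Hp].
  exact: reaches_nonroot.
by apply/subtreeP; apply: reaches_trans (reaches_parent Hc) Hp.
Qed.

Lemma subtree_subP v w : reflect (reaches v w) (subtree v \subset subtree w).
Proof.
apply: (iffP subsetP) => [Hsub|Hvw u /subtreeP Huv].
  by apply/subtreeP/Hsub/subtreeP/reaches_refl.
by apply/subtreeP; apply: reaches_trans Huv Hvw.
Qed.

Lemma subtree_inj : injective subtree.
Proof.
by move=> v w Evw; apply: reaches_antisym; apply/subtree_subP; rewrite Evw subxx.
Qed.

Definition join_irreducible S := exists S',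
  [/\ desc_closed x S', S' \proper S & forall T, desc_closed x T -> T \proper S -> T \subset S'].

Lemma subtree_join_irreducible v : x v != None -> join_irreducible (subtree v).
Proof.
move=> Hv; have HS := subtree_closed Hv.
have Hvv : v \in subtree v by apply/subtreeP/reaches_refl.
case Ev: (x v) Hv => [a|//] _.
have Ha : a \notin subtree v.
  apply/negP => /subtreeP Hav; have Eva := reaches_antisym (reaches_parent Ev) Hav.
  by move: Ev; rewrite -Eva => /(forest_no_loop Hf).
exists (subtree v :\ v); split; [exact: closed_setD1_top Ev Ha | exact: properD1 |].
move=> T HT HTv; apply/subsetP => w Hw; apply/setD1P; split.
  apply: contraTneq HTv => Ewv; rewrite properE negb_and negbK; apply/orP; right.
  by apply/subsetP => u /subtreeP Huv; apply: closed_reaches HT _ Huv; rewrite -Ewv.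
exact: subsetP (proper_sub HTv) w Hw.
Qed.

Lemma exists_top_vertex S s : desc_closed x S -> s \in S ->
  exists m a, [/\ m \in S, reaches s m, x m = Some a & a \notin S].
Proof.
move=> HS Hs; have /desc_closedP [Hnr _] := HS.
have Hprune := (prune_below HS).1.
have Hs' : prune x S s != None by rewrite ffunE Hs; apply: Hnr.
have [b [a [[k Hk] Hb Ha]]] := exists_top_edge (pruning_forest Hprune Hf) Hs'.
have HbS : b \in S by move: Hb; rewrite ffunE; case: ifP.
exists b, a; split=> //.
- by exists k; apply: pruning_iter Hk.
- by move: Hb; rewrite ffunE HbS.
- by apply/negP => HaS; move: Ha; rewrite ffunE HaS => /eqP; apply/negP/Hnr.
Qed.

Lemma join_irreducible_top_uniq S m a m' a' :
  desc_closed x S -> join_irreducible S ->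
  m \in S -> x m = Some a -> a \notin S ->
  m' \in S -> x m' = Some a' -> a' \notin S -> m = m'.
Proof.
move=> HS [S' [_ HS'S Hmax]] Hm Hma Ha Hm' Hma' Ha'.
have Hsub z az : z \in S -> x z = Some az -> az \notin S -> S :\ z \subset S'.
  by move=> Hz Hza Haz; apply: Hmax (properD1 Hz); apply: closed_setD1_top Hz Hza Haz.
apply/eqP; apply: contraTT HS'S => Hmm'; rewrite properE negb_and negbK; apply/orP; right.
apply/subsetP => u Hu; case: (eqVneq u m) => [->|Hum].
  by apply: (subsetP (Hsub _ _ Hm' Hma' Ha')); rewrite in_setD1 Hm Hmm'.
by apply: (subsetP (Hsub _ _ Hm Hma Ha)); rewrite in_setD1 Hum Hu.
Qed.

Lemma join_irreducible_subtree S : desc_closed x S -> join_irreducible S ->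
  exists2 v, x v != None & S = subtree v.
Proof.
move=> HS HJ; have [S' [_ HS'S _]] := HJ.
have [s Hs] : exists s, s \in S by case/properP: HS'S => _ [s Hs _]; exists s.
have [m [a [Hm _ Hma Ha]]] := exists_top_vertex HS Hs.
exists m; first by rewrite Hma.
apply/eqP; rewrite eqEsubset; apply/andP; split; apply/subsetP => u Hu; last first.
  by move/subtreeP: Hu; apply: closed_reaches.
have [m' [a' [Hm' Hum' Hma' Ha']]] := exists_top_vertex HS Hu.
by apply/subtreeP; rewrite (join_irreducible_top_uniq HS HJ Hm Hma Ha Hm' Hma' Ha').
Qed.

End Ancestry.

Lemma inj_surj_bij (T : choiceType) (T' : eqType) (f : T -> T') :
  injective f -> (forall y, exists x, f x == y) -> bijective f.
Proof.
move=> Hinj Hsurj; exists (fun y => xchoose (Hsurj y)) => [x|y].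
  by apply: Hinj; apply/eqP; apply: (xchooseP (Hsurj _)).
by apply/eqP; apply: (xchooseP (Hsurj _)).
Qed.

Lemma reaches_iso_parent n m (x : parent_fun n) (x' : parent_fun m) (g : 'I_n -> 'I_m) :
  is_forest x -> is_forest x' -> bijective g ->
  (forall v w, reaches x v w <-> reaches x' (g v) (g w)) ->
  forall v, x' (g v) = omap g (x v).
Proof.
move=> Hf Hf' [h ghK hgK] Hg v.
have Hg' v' w' : reaches x' v' w' -> reaches x (h v') (h w').
  by rewrite -{1}(hgK v') -{1}(hgK w') => /Hg.
case Ev: (x v) => [p|] /=.
  have [Hvp Hpv Hmax] := (parent_iff Hf v p).1 Ev.
  apply/(parent_iff Hf'); split; first exact/Hg.
    by rewrite (inj_eq (can_inj ghK)).
  move=> w' /Hg'; rewrite ghK => /Hmax [Ew|Hpw].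
    by left; rewrite -Ew hgK.
  by right; rewrite -[w']hgK; apply/Hg.
apply/(root_iff Hf') => w' /Hg'; rewrite ghK => /(reaches_from_root Ev) Ew.
by rewrite -Ew hgK.
Qed.

(* An isomorphism [psi] between the lattices of [desc_closed] sets of two trees
   maps join-irreducibles to join-irreducibles, that is subtrees to subtrees;
   sending roots to roots, this induces a bijection of vertices preserving
   ancestry. *)
Section VertexMap.
Variables (n m : nat) (x : parent_fun n) (x' : parent_fun m) (r : 'I_n) (r' : 'I_m).
Hypotheses (Hx : is_tree x) (Hx' : is_tree x') (Hr : x r = None) (Hr' : x' r' = None).
Variable psi : {set 'I_n} -> {set 'I_m}.
Hypotheses (psi_closed : forall S, desc_closed x S -> desc_closed x' (psi S))
  (psi_subset : forall S T, desc_closed x S -> desc_closed x T ->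
     (S \subset T) = (psi S \subset psi T))
  (psi_surj : forall S', desc_closed x' S' -> exists2 S, desc_closed x S & psi S = S').

Let Hf : is_forest x := tree_forest Hx.
Let Hf' : is_forest x' := tree_forest Hx'.

Lemma psi_proper S T : desc_closed x S -> desc_closed x T ->
  (S \proper T) = (psi S \proper psi T).
Proof. by move=> HS HT; rewrite !properE -!psi_subset. Qed.

Lemma psi_join_irreducible S : desc_closed x S ->
  join_irreducible x' (psi S) <-> join_irreducible x S.
Proof.
move=> HS; split=> [[W' [HW' HW'S Hmax]]|[S' [HS' HS'S Hmax]]].
  have [W HW EW] := psi_surj HW'.
  exists W; split=> //; first by rewrite psi_proper // EW.
  move=> T HT HTS; rewrite psi_subset // EW; apply: Hmax; first exact: psi_closed.
  by rewrite -psi_proper.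
exists (psi S'); split; [exact: psi_closed | by rewrite -psi_proper |].
move=> T' HT'; have [T HT <-] := psi_surj HT'.
by rewrite -psi_proper // -psi_subset //; apply: Hmax.
Qed.

Definition vertex_map v : 'I_m :=
  if x v != None then
    odflt r' [pick w | (x' w != None) && (psi (subtree x v) == subtree x' w)]
  else r'.

Lemma vertex_mapP v : x v != None ->
  x' (vertex_map v) != None /\ psi (subtree x v) = subtree x' (vertex_map v).
Proof.
move=> Hv; rewrite /vertex_map Hv.
have HJ : join_irreducible x' (psi (subtree x v)).
  by apply/psi_join_irreducible; [apply: subtree_closed | apply: subtree_join_irreducible].
have [w Hw Ew] := join_irreducible_subtree Hf' (psi_closed (subtree_closed Hf Hv)) HJ.
case: pickP => [w' /andP [Hw' /eqP Ew']|Hnone] //.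
by have := Hnone w; rewrite Hw Ew eqxx.
Qed.

Lemma vertex_map_root v : x v = None -> vertex_map v = r'.
Proof. by rewrite /vertex_map => ->. Qed.

Lemma vertex_map_nonroot_surj w : x' w != None -> exists2 v, x v != None & vertex_map v = w.
Proof.
move=> Hw; have [S HS ES] := psi_surj (subtree_closed Hf' Hw).
have HJ : join_irreducible x S.
  by apply/(psi_join_irreducible HS); rewrite ES; apply: subtree_join_irreducible.
have [v Hv ESv] := join_irreducible_subtree Hf HS HJ.
exists v => //; have [_ Ev] := vertex_mapP Hv.
by apply: (subtree_inj Hf'); rewrite -Ev -ES ESv.
Qed.

Lemma vertex_map_reaches v w :
  reaches x v w <-> reaches x' (vertex_map v) (vertex_map w).
Proof.
have Hroot := tree_rootE Hx Hr; have Hroot' := tree_rootE Hx' Hr'.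
case: (eqVneq (x w) None) => [/eqP|Hw].
  rewrite Hroot => /eqP ->; rewrite (vertex_map_root Hr).
  by split=> _; apply: tree_reaches_root.
have [Hgw Ew] := vertex_mapP Hw.
case: (eqVneq (x v) None) => [Hv|Hv].
  rewrite (vertex_map_root Hv); split=> [/(reaches_from_root Hv) Ewv|].
    by rewrite Ewv Hv eqxx in Hw.
  by move/(reaches_from_root Hr') => Ew'; rewrite Ew' Hr' eqxx in Hgw.
have [_ Ev] := vertex_mapP Hv.
have Hsub := psi_subset (subtree_closed Hf Hv) (subtree_closed Hf Hw).
rewrite Ev Ew in Hsub; split=> [|Hgvw].
  by move/(subtree_subP Hf); rewrite Hsub => /(subtree_subP Hf').
by apply/(subtree_subP Hf); rewrite Hsub; apply/(subtree_subP Hf').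
Qed.

Lemma vertex_map_bij : bijective vertex_map.
Proof.
apply: inj_surj_bij => [v w Evw|w].
  by apply: (reaches_antisym Hf); apply/vertex_map_reaches; rewrite Evw; apply: reaches_refl.
case: (eqVneq (x' w) None) => [/eqP|Hw].
  by rewrite (tree_rootE Hx' Hr') => /eqP ->; exists r; rewrite vertex_map_root.
by have [v _ <-] := vertex_map_nonroot_surj Hw; exists v.
Qed.

End VertexMap.

Lemma represents_iso_closed (P P' : fposet) n m (x : parent_fun n) (x' : parent_fun m) :
  represents P x -> represents P' x' -> fp_iso P P' ->
  exists psi : {set 'I_n} -> {set 'I_m},
    [/\ forall S, desc_closed x S -> desc_closed x' (psi S),
        forall S T, desc_closed x S -> desc_closed x T ->
          (S \subset T) = (psi S \subset psi T)
      & forall S', desc_closed x' S' -> exists2 S, desc_closed x S & psi S = S'].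
Proof.
case=> i [Hi Hcl Hsurj Hle]; case=> j [Hj Hcl' Hsurj' Hle'] [f [[f' ff'K f'fK] Hfle]].
pose psi S := if [pick a | i a == S] is Some a then j (f a) else set0.
have psiE a : psi (i a) = j (f a).
  rewrite /psi; case: pickP => [a' /eqP /Hi -> //|Hnone].
  by have := Hnone a; rewrite eqxx.
exists psi; split.
- by move=> S /Hsurj [a <-]; rewrite psiE.
- by move=> S T /Hsurj [a <-] /Hsurj [b <-]; rewrite !psiE -Hle -Hle' Hfle.
- by move=> S' /Hsurj' [b' <-]; exists (i (f' b')); rewrite ?psiE ?f'fK.
Qed.

Lemma tree_iso_of_interval_iso (t u : rtree) :
  fp_iso (prodQ [:: t]) (prodQ [:: u]) -> tree_iso t u.
Proof.
move=> Hiso; have Ht := rt_isTree t; have Hu := rt_isTree u.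
have Rt := represents_prod_one (interval_represents t).
have Ru := represents_prod_one (interval_represents u).
have [psi [Hcl Hsub Hsurj]] := represents_iso_closed Rt Ru Hiso.
have [r Hr] := tree_has_root Ht; have [r' Hr'] := tree_has_root Hu.
have Hbij := vertex_map_bij Ht Hu Hr Hr' Hcl Hsub Hsurj.
have Hreach := vertex_map_reaches Ht Hu Hr Hr' Hcl Hsub Hsurj.
exists (vertex_map (rt_par t) (rt_par u) r' psi); split=> //.
exact: reaches_iso_parent (tree_forest Ht) (tree_forest Hu) Hbij Hreach.
Qed.

Lemma prodQ_represented (Q : seq rtree) : exists t : rtree, represents (prodQ Q) (rt_par t).
Proof.
elim: Q => [|t1 Q [[[|n2] y Hy] IH]].
- by exists (RTree single_vertex_tree); apply: represents_one.
- by have := no_tree0 y; rewrite Hy.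
- have [r1 Hr1] := tree_has_root (rt_isTree t1); have [r2 Hr2] := tree_has_root Hy.
  exists (RTree (root_merge_tree (rt_isTree t1) Hr1 Hy Hr2)).
  exact: represents_root_merge (interval_represents t1) IH.
Qed.

Lemma prodQ_iso_interval (Q : seq rtree) : exists t : rtree, fp_iso (prodQ Q) (prodQ [:: t]).
Proof.
have [t Ht] := prodQ_represented Q; exists t.
exact: represents_iso Ht (represents_prod_one (interval_represents t)).
Qed.

Local Open Scope ring_scope.

Theorem lemma6p9 (K : fieldType) (H : lmodType K) (F : seq rtree -> H)
  (F_iso : forall Q Q' : seq rtree, fp_iso (prodQ Q) (prodQ Q') -> F Q = F Q')
  (F_span : forall h : H, exists n (c : 'I_n -> K) (Qs : 'I_n -> seq rtree),
      h = \sum_(i < n) c i *: F (Qs i))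
  (F_free : forall n (c : 'I_n -> K) (Qs : 'I_n -> seq rtree),
      (forall i j, i != j -> ~ fp_iso (prodQ (Qs i)) (prodQ (Qs j))) ->
      \sum_(i < n) c i *: F (Qs i) = 0 -> forall i, c i = 0) :
  (forall h : H, exists n (c : 'I_n -> K) (ts : 'I_n -> rtree),
      h = \sum_(i < n) c i *: F [:: ts i]) /\
  (forall n (c : 'I_n -> K) (ts : 'I_n -> rtree),
      (forall i j, i != j -> ~ tree_iso (ts i) (ts j)) ->
      \sum_(i < n) c i *: F [:: ts i] = 0 -> forall i, c i = 0).
Proof.
split=> [h|n c ts Hts].
  have [n [c [Qs ->]]] := F_span h.
  have [ts Hts] := fin_all_exists (fun i => prodQ_iso_interval (Qs i)).
  exists n, c, ts; apply: eq_bigr => i _.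
  by rewrite (F_iso _ _ (Hts i)).
apply: (F_free n c (fun i => [:: ts i])) => i j Hij Hiso.
exact: Hts i j Hij (tree_iso_of_interval_iso Hiso).
Qed.
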